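(* Let $\delta\in(0,1)$ and suppose $N\le 1000\ell n^{(1-\delta)\ell}$ and $\ell\ge 20$. Then with probability at least $0.95$ over a sample $G'\sim\mathrm{RGP}_{N,\ell}\circ\mathcal{G}(n,\tfrac12)$, with $G'=(\{S_i\}_{i\in[N]},E')$, the following event occurs: for every $M\subseteq[N]$ with $|M|\le n^{0.99\delta}/\ell$, we have $\left|\bigcup_{i\in M}S_i\right|\ge 0.01\delta|M|\ell$.
   Context: $\mathcal{G}(n,\tfrac12)$ is the Erdős–Rényi distribution on $n$-vertex graphs with edge probability $1/2$. Randomized graph product: given an $n$-vertex graph $G=(V,E)$ and positive integers $N,\ell$, the random graph $G'\sim\mathrm{RGP}_{N,\ell}(G)$ is constructed as follows. For each $i\in[N]$, independently sample $\ell$ vertices uniformly at random from $V$ and let $S_i\subseteq V$ be the set of sampled vertices. The vertex set is $\{S_1,\dots,S_N\}$ (one vertex per index $i$), and for distinct $i,j$, $S_i,S_j$ are adjacent iff $S_i\cup S_j$ induces a clique in $G$. $\mathrm{RGP}_{N,\ell}\circ\mathcal{G}(n,\tfrac12)$ denotes sampling $G\sim\mathcal{G}(n,\tfrac12)$ and then $G'\sim\mathrm{RGP}_{N,\ell}(G)$. *)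

From Stdlib Require Import Reals.
From mathcomp Require Import all_boot.


Local Open Scope R_scope.
Local Open Scope nat_scope.



(* Boolean comparison on reals (so events are decidable predicates on a
   finite sample space). *)
Definition Rleb (x y : R) : bool := if Rle_dec x y then true else false.

(* Vertex set V = 'I_n.  A simple graph on V is an edge set
   E : {set {set 'I_n}} consisting of 2-element subsets. *)
Definition pairs (n : nat) : {set {set 'I_n}} := [set e : {set 'I_n} | #|e| == 2].

(* G(n,1/2): uniform over all E \subset pairs n.
   RGP_{N,l}: for each i in 'I_N, a sequence of l independent uniform
   vertices s i : {ffun 'I_l -> 'I_n}; S_i is the set of sampled vertices. *)
Definition samples (n N l : nat) := {ffun 'I_N -> {ffun 'I_l -> 'I_n}}.

Definition Sset (n l : nat) (t : {ffun 'I_l -> 'I_n}) : {set 'I_n} :=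
  [set t j | j : 'I_l].

Definition is_clique (n : nat) (E : {set {set 'I_n}}) (A : {set 'I_n}) : bool :=
  [forall x in A, forall y in A, (x != y) ==> ([set x; y] \in E)].

Definition rgp_adj (n N l : nat) (E : {set {set 'I_n}}) (s : samples n N l)
  (i j : 'I_N) : bool :=
  (i != j) && is_clique n E (Sset n l (s i) :|: Sset n l (s j)).

(* Probability of an event over G ~ G(n,1/2), G' ~ RGP_{N,l}(G):
   the joint sample space is uniform over pairs (E, s) with E a simple
   graph edge set and s the vertex samples. *)
Definition prob_RGP_Gn (n N l : nat)
  (P : {set {set 'I_n}} -> samples n N l -> bool) : R :=
  Rdiv (INR #|[set w : {set {set 'I_n}} * samples n N l |
            (w.1 \subset pairs n) && P w.1 w.2]|)
       (INR #|[set w : {set {set 'I_n}} * samples n N l | w.1 \subset pairs n]|).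

Definition expansion_event (n N l : nat) (delta : R) (s : samples n N l) : bool :=
  [forall M : {set 'I_N},
     Rleb (INR #|M|) (Rpower (INR n) (99/100 * delta) / INR l) ==>
     Rleb (1/100 * delta * INR #|M| * INR l)
          (INR #|\bigcup_(i in M) Sset n l (s i)|)].

(* A union bound over the possible witnesses.  If the event fails, some set M
   of m <= n^(0.99 delta)/l indices has all its S_i inside a set U of
   k < delta m l/100 vertices.  For fixed M and U this happens for a fraction
   (k/n)^(l m) of the samples, and there are at most N^m choices of M and n^k
   of U.  Since N <= 1000 l n^((1-delta) l) and k <= n^(0.99 delta)/100, the
   powers of n cancel, so the m-th term is at most (2000 l^2 100^-l)^m, and
   these sum to less than 0.05 when l >= 20. *)
From Stdlib Require Import Reals Lra.
From mathcomp Require Import all_boot.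

Lemma card_bigcup_le (T I : finType) (P : pred I) (B : I -> {set T}) :
  #|\bigcup_(i | P i) B i| <= \sum_(i | P i) #|B i|.
Proof.
elim/big_rec2: _ => [|i n U _ leUn]; first by rewrite cards0.
by rewrite (leq_trans (leq_card_setU _ _).1) ?leq_add2l.
Qed.

Lemma leq_bin_exp n k : 'C(n, k) <= n ^ k.
Proof.
rewrite (leq_trans (leq_pmulr _ (fact_gt0 k))) // bin_ffact ffact_prod.
apply: (@leq_trans (\prod_(i < k) n)); first by apply: leq_prod => i _; apply: leq_subr.
by rewrite prod_nat_const card_ord.
Qed.

Lemma sum_over_sets_le (T : finType) (K : nat) (F : nat -> nat) :
  (forall k, K <= k <= #|T| -> F k = 0) ->
  \sum_(A : {set T}) F #|A| <= \sum_(k < K) #|T| ^ k * F k.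
Proof.
move=> F0.
have -> : \sum_(A : {set T}) F #|A| = \sum_(A : {set T}) \sum_(k < K | #|A| == k) F k.
  apply: eq_bigr => A _; case: (ltnP #|A| K) => [ltAK | leKA].
    by rewrite (big_pred1 (Ordinal ltAK)).
  rewrite F0 ?leKA ?max_card // big1 // => k /eqP eqAk.
  by have := ltn_ord k; rewrite -eqAk ltnNge leKA.
rewrite (exchange_big_dep predT) //= leq_sum // => k _.
by rewrite sum_nat_cond_const card_draws leq_mul2r leq_bin_exp orbT.
Qed.

Definition samples_within (n N l : nat) (M : {set 'I_N}) (U : {set 'I_n}) :
  {set samples n N l} :=
  [set s : samples n N l | [forall i in M, Sset n l (s i) \subset U]].

Lemma card_Sset_sub (n l : nat) (U : {set 'I_n}) :
  #|[pred t : {ffun 'I_l -> 'I_n} | Sset n l t \subset U]| = #|U| ^ l.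
Proof.
rewrite -[l in RHS]card_ord -card_ffun_on; apply: eq_card => t /=.
rewrite /Sset; apply/subsetP/ffun_onP => [tU j | tU _ /imsetP[j _ ->]] //.
by apply: tU; apply: imset_f.
Qed.

Lemma card_samples_within (n N l : nat) (M : {set 'I_N}) (U : {set 'I_n}) :
  #|samples_within n N l M U| = (#|U| ^ l) ^ #|M| * (n ^ l) ^ (N - #|M|).
Proof.
pose F i := if i \in M then [pred t : {ffun 'I_l -> 'I_n} | Sset n l t \subset U]
            else predT.
have -> : #|samples_within n N l M U| = #|family F|.
  apply: eq_card => s; rewrite inE; apply/forall_inP/familyP => sM i.
    by rewrite /F; case: ifP => // /sM.
  by move=> iM; have := sM i; rewrite /F iM.
rewrite card_family foldrE big_map big_enum /= (bigID (mem M)) /=.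
rewrite (eq_bigr (fun _ => #|U| ^ l)) => [|i iM]; last by rewrite /F iM card_Sset_sub.
rewrite [X in _ * X](eq_bigr (fun _ => n ^ l)) => [|i iM]; last first.
  by rewrite /F (negbTE iM) (eq_card (B := predT)) // card_ffun !card_ord.
have -> : N - #|M| = #|[predC M]|.
  apply: (@addnI #|M|); rewrite cardC card_ord subnKC //.
  by rewrite -[X in _ <= X](card_ord N) max_card.
by rewrite !prod_nat_const.
Qed.

Lemma card_samples (n N l : nat) : #|samples n N l| = (n ^ l) ^ N.
Proof. by rewrite !card_ffun !card_ord. Qed.

Local Open Scope R_scope.

Lemma RlebP (x y : R) : reflect (x <= y) (Rleb x y).
Proof. by rewrite /Rleb; case: Rle_dec => xy; constructor. Qed.

(* [mult_INR] and [pow_INR] are stated for [Nat.mul] and [Nat.pow], which do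
   not match MathComp's [muln] and [expn] syntactically. *)
Lemma INR_muln (a b : nat) : INR (a * b)%N = INR a * INR b.
Proof. exact: mult_INR. Qed.

Lemma INR_expn (a b : nat) : INR (a ^ b)%N = INR a ^ b.
Proof. by elim: b => [|b IHb]; rewrite ?expnS ?INR_muln ?IHb. Qed.

Lemma Rpower_gt0 (x y : R) : 0 < Rpower x y.
Proof. exact: exp_pos. Qed.

Definition violation (n l : nat) (delta : R) (m k : nat) : bool :=
  Rleb (INR m) (Rpower (INR n) (99/100 * delta) / INR l) &&
  ~~ Rleb (1/100 * delta * INR m * INR l) (INR k).

Lemma violation_lt {n l m k : nat} {delta : R} :
  delta <= 1 -> violation n l delta m k -> (k < m * l)%N.
Proof.
move=> delta_le1 /andP[_ /RlebP /Rnot_le_lt k_small]; apply/ltP/INR_lt.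
have := pos_INR k; have := Rmult_le_pos _ _ (pos_INR m) (pos_INR l).
rewrite INR_muln; nra.
Qed.

Lemma not_expansion_event_within (n N l : nat) (delta : R) :
  [set s | ~~ expansion_event n N l delta s] \subset
  \bigcup_(MU : {set 'I_N} * {set 'I_n} | violation n l delta #|MU.1| #|MU.2|)
     samples_within n N l MU.1 MU.2.
Proof.
apply/subsetP => s; rewrite inE => /forallPn[M]; rewrite negb_imply => viol.
apply/bigcupP; exists (M, \bigcup_(i in M) Sset n l (s i)) => //.
by rewrite inE; apply/forall_inP => i iM; exact: (bigcup_sup i iM).
Qed.

(* N^m bounds the choices of M, n^k those of U, and (k^l)^m (n^l)^(N-m)
   counts the samples with S_i inside U for all i in M. *)
Definition union_bound_term (n N l : nat) (delta : R) (m : nat) : nat :=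
  N ^ m * \sum_(k < m * l)
    n ^ k * (violation n l delta m k * ((k ^ l) ^ m * (n ^ l) ^ (N - m))).

Lemma card_not_expansion_event_le_sum (n N l : nat) (delta : R) : delta <= 1 ->
  (#|[set s | ~~ expansion_event n N l delta s]| <=
   \sum_(m < N.+1) union_bound_term n N l delta m)%N.
Proof.
move=> delta_le1.
pose G m k := (violation n l delta m k * ((k ^ l) ^ m * (n ^ l) ^ (N - m)))%N.
apply: leq_trans (subset_leq_card (not_expansion_event_within n N l delta)) _.
apply: leq_trans (card_bigcup_le _ _ _ _) _.
rewrite big_mkcond -(pair_bigA _ (fun (M : {set 'I_N}) (U : {set 'I_n}) =>
  if violation n l delta #|M| #|U| then #|samples_within n N l M U| else 0%N)) /=.
rewrite (eq_bigr (fun M : {set 'I_N} => \sum_(U : {set 'I_n}) G #|M| #|U|))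
  => [|M _]; last first.
  by apply: eq_bigr => U _; rewrite /G card_samples_within; case: violation; rewrite ?mul1n.
apply: leq_trans (sum_over_sets_le _ N.+1 (fun m => \sum_(U : {set 'I_n}) G m #|U|) _) _.
  by move=> m; rewrite card_ord ltnNge => /andP[/negP].
rewrite card_ord; apply: leq_sum => m _; rewrite leq_mul2l; apply/orP; right.
apply: leq_trans (sum_over_sets_le _ (m * l) (G m) _) _; last by rewrite card_ord.
move=> k /andP[lek _]; rewrite /G; case viol: violation => //.
by have := violation_lt delta_le1 viol; rewrite ltnNge lek.
Qed.

Lemma exponent_balance (x Nr kr d : R) (l : nat) :
  1 <= x -> 0 <= Nr <= 1000 * INR l * Rpower x ((1 - d) * INR l) ->
  0 <= kr <= Rpower x (99/100 * d) / 100 ->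
  Nr * Rpower x (d * INR l / 100) * kr ^ l <= 1000 * INR l * (1/100) ^ l * x ^ l.
Proof.
move=> x_ge1 [Nr_ge0 Nr_le] [kr_ge0 kr_le].
have x_gt0 : 0 < x by lra.
have kr_pow : kr ^ l <= (1/100) ^ l * Rpower x (99/100 * d * INR l).
  rewrite -Rpower_mult Rpower_pow; last exact: Rpower_gt0.
  by rewrite -Rpow_mult_distr; apply: pow_incr; lra.
have x_pow : x ^ l = Rpower x ((1 - d) * INR l) * Rpower x (d * INR l / 100) *
                     Rpower x (99/100 * d * INR l).
  by rewrite -!Rpower_plus -Rpower_pow //; congr Rpower; field.
rewrite x_pow; set A := Rpower x (d * INR l / 100).
have A_gt0 : 0 < A by exact: Rpower_gt0.
apply: (Rle_trans _ (1000 * INR l * Rpower x ((1 - d) * INR l) * A *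
                     ((1/100) ^ l * Rpower x (99/100 * d * INR l)))); last by right; ring.
apply: Rmult_le_compat => //.
- by apply: Rmult_le_pos; lra.
- exact: pow_le.
- by apply: Rmult_le_compat_r; lra.
Qed.

Lemma violation_term_le (n N l m k : nat) (delta : R) :
  (0 < n)%N -> (0 < l)%N -> 0 < delta < 1 ->
  INR N <= 1000 * INR l * Rpower (INR n) ((1 - delta) * INR l) ->
  violation n l delta m k ->
  INR (N ^ m * n ^ k * (k ^ l) ^ m)%N <= (1000 * INR l * (1/100) ^ l * INR n ^ l) ^ m.
Proof.
move=> n_gt0 l_gt0 delta01 N_le /andP[/RlebP m_le /RlebP/Rnot_le_lt k_lt].
set x := INR n in N_le m_le *; set P := Rpower x (99/100 * delta) in m_le *.
have x_ge1 : 1 <= x by apply: (le_INR 1); apply/leP.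
have l_gt0R : 0 < INR l by apply: lt_0_INR; apply/ltP.
have ml_le : INR m * INR l <= P.
  apply: (Rle_trans _ (P / INR l * INR l)); first by apply: Rmult_le_compat_r; lra.
  by right; field; lra.
have P_gt0 : 0 < P by exact: Rpower_gt0.
have k_le : 0 <= INR k <= P / 100 by split; [exact: pos_INR | nra].
have xk_le : x ^ k <= Rpower x (delta * INR l / 100) ^ m.
  rewrite -(Rpower_pow k); last lra.
  rewrite -(Rpower_pow m) ?Rpower_mult; last exact: Rpower_gt0.
  apply: Rle_Rpower => //; nra.
rewrite !INR_muln !INR_expn -/x.
have N_ge0 := pos_INR N; have kl_ge0 := pow_le _ l (proj1 k_le).
apply: (Rle_trans _ ((INR N * Rpower x (delta * INR l / 100) * INR k ^ l) ^ m)).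
  rewrite !Rpow_mult_distr; apply: Rmult_le_compat_r; first exact: pow_le.
  by apply: Rmult_le_compat_l => //; apply: pow_le.
apply: pow_incr; split; last exact: exponent_balance.
by apply: Rmult_le_pos => //; apply: Rmult_le_pos => //; apply: Rlt_le; apply: Rpower_gt0.
Qed.

Lemma INR_sum_le_const (K : nat) (F : nat -> nat) (c : R) :
  (forall i, (i < K)%N -> INR (F i) <= c) -> INR (\sum_(i < K) F i)%N <= INR K * c.
Proof.
elim: K => [|K IHK] F_le; first by rewrite big_ord0 /=; lra.
rewrite S_INR big_ord_recr /= plus_INR.
have sum_le := IHK (fun i iK => F_le i (ltnW iK)); have FK_le := F_le K (ltnSn K).
by rewrite Rmult_plus_distr_r Rmult_1_l; exact: Rplus_le_compat.
Qed.

Lemma INR_sum_geometric (M : nat) (a : nat -> nat) (r X : R) :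
  0 <= r <= 1/2 -> 0 <= X -> (forall m, (m < M)%N -> INR (a m) <= r ^ m.+1 * X) ->
  INR (\sum_(m < M) a m)%N <= 2 * r * X.
Proof.
move=> r01 X_ge0 a_le.
suff : INR (\sum_(m < M) a m)%N + 2 * r ^ M.+1 * X <= 2 * r * X.
  have := Rmult_le_pos _ _ (pow_le r M.+1 (proj1 r01)) X_ge0; lra.
elim: M a_le => [|M IHM] a_le; first by rewrite big_ord0 /=; lra.
apply: (Rle_trans _ _ _ _ (IHM (fun m mM => a_le m (ltnW mM)))).
rewrite big_ord_recr /= plus_INR Rplus_assoc; apply: Rplus_le_compat_l.
have := a_le M (ltnSn M); have := Rmult_le_pos _ _ (pow_le r M.+1 (proj1 r01)) X_ge0.
rewrite /=; nra.
Qed.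

Lemma union_bound_term_le (n N l m : nat) (delta : R) :
  (0 < n)%N -> (0 < l)%N -> 0 < delta < 1 ->
  INR N <= 1000 * INR l * Rpower (INR n) ((1 - delta) * INR l) -> (0 < m <= N)%N ->
  INR (union_bound_term n N l delta m)
  <= (2 * INR l * (1000 * INR l * (1/100) ^ l)) ^ m * INR ((n ^ l) ^ N)%N.
Proof.
move=> n_gt0 l_gt0 delta01 N_le /andP[m_gt0 m_le].
set C := 1000 * INR l * (1/100) ^ l; set X := INR ((n ^ l) ^ N)%N.
have C_ge0 : 0 <= C by apply: Rmult_le_pos; [have := pos_INR l | apply: pow_le]; lra.
have X_ge0 : 0 <= X by exact: pos_INR.
pose T k := (N ^ m *
  (n ^ k * (violation n l delta m k * ((k ^ l) ^ m * (n ^ l) ^ (N - m)))))%N.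
have T_le k : (k < m * l)%N -> INR (T k) <= C ^ m * X.
  move=> _; rewrite /T; case viol: violation; last first.
    by rewrite mul0n !muln0; apply: Rmult_le_pos => //; apply: pow_le.
  rewrite mul1n !mulnA INR_muln.
  have -> : X = INR ((n ^ l) ^ m)%N * INR ((n ^ l) ^ (N - m))%N.
    by rewrite -INR_muln -expnD subnKC.
  rewrite -Rmult_assoc; apply: Rmult_le_compat_r; first exact: pos_INR.
  rewrite !INR_expn -Rpow_mult_distr.
  exact: (violation_term_le n N l m k delta n_gt0 l_gt0 delta01 N_le viol).
have ml_le : (m * l <= (2 * l) ^ m)%N.
  rewrite expnMn; apply: leq_mul; first exact: ltnW (ltn_expl m (ltnSn 1)).
  by rewrite -{1}(expn1 l) leq_pexp2l.
rewrite /union_bound_term big_distrr /=.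
apply: (Rle_trans _ _ _ (INR_sum_le_const (m * l) T (C ^ m * X) T_le)).
rewrite Rpow_mult_distr -Rmult_assoc; apply: Rmult_le_compat_r => //.
apply: Rmult_le_compat_r; first exact: pow_le.
have := le_INR _ _ (elimT leP ml_le); rewrite INR_expn !INR_muln.
by have -> : INR 2 = 2 by rewrite /=; lra.
Qed.

Lemma union_bound_ratio_le (l : nat) :
  (20 <= l)%N -> 2 * INR l * (1000 * INR l * (1/100) ^ l) <= 1/40.
Proof.
move=> l_ge20; rewrite -(subnKC l_ge20); elim: (l - 20)%N => [|j IHj].
  by rewrite addn0 /=; lra.
rewrite addnS S_INR -tech_pow_Rmult.
have := pow_le (1/100) (20 + j) ltac:(lra); have : 20 <= INR (20 + j).
  by rewrite plus_INR; have := pos_INR j; rewrite /=; lra.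
nra.
Qed.

Lemma prob_RGP_Gn_sample_event (n N l : nat) (P : pred (samples n N l)) :
  (0 < n)%N ->
  prob_RGP_Gn n N l (fun _ s => P s) = 1 - INR #|[set s | ~~ P s]| / INR ((n ^ l) ^ N)%N.
Proof.
move=> n_gt0; rewrite /prob_RGP_Gn.
set A := [set E : {set {set 'I_n}} | E \subset pairs n].
have -> : [set w : {set {set 'I_n}} * samples n N l | (w.1 \subset pairs n) && P w.2] =
          setX A [set s | P s] by apply/setP => -[E s]; rewrite !inE.
have -> : [set w : {set {set 'I_n}} * samples n N l | w.1 \subset pairs n] =
          setX A [set: samples n N l] by apply/setP => -[E s]; rewrite !inE andbT.
have A_gt0 : 0 < INR #|A|.
  apply: lt_0_INR; apply/ltP; rewrite card_gt0.
  by apply/set0Pn; exists set0; rewrite inE sub0set.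
have X_gt0 : 0 < INR ((n ^ l) ^ N)%N by apply: lt_0_INR; apply/ltP; rewrite !expn_gt0 n_gt0.
rewrite !cardsX cardsT card_samples !INR_muln.
have -> : INR #|[set s | P s]| = INR ((n ^ l) ^ N)%N - INR #|[set s | ~~ P s]|.
  rewrite -card_samples -(cardsC [set s | P s]) plus_INR.
  suff -> : ~: [set s | P s] = [set s | ~~ P s] by ring.
  by apply/setP => s; rewrite !inE.
by field; lra.
Qed.

Lemma card_not_expansion_event_le (n N l : nat) (delta : R) :
  (0 < n)%N -> (20 <= l)%N -> 0 < delta < 1 ->
  INR N <= 1000 * INR l * Rpower (INR n) ((1 - delta) * INR l) ->
  INR #|[set s | ~~ expansion_event n N l delta s]| <= 1/20 * INR ((n ^ l) ^ N)%N.
Proof.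
move=> n_gt0 l_ge20 delta01 N_le.
have l_gt0 : (0 < l)%N by apply: leq_trans l_ge20.
set r := 2 * INR l * (1000 * INR l * (1/100) ^ l); set X := INR ((n ^ l) ^ N)%N.
have r_le : r <= 1/40 := union_bound_ratio_le l l_ge20.
have r_ge0 : 0 <= r.
  by have := pos_INR l; have := pow_le (1/100) l ltac:(lra); rewrite /r; nra.
have X_ge0 : 0 <= X by exact: pos_INR.
apply: (Rle_trans _ _ _ (le_INR _ _ (elimT leP
  (card_not_expansion_event_le_sum n N l delta (Rlt_le _ _ (proj2 delta01)))))).
rewrite big_ord_recl {1}/union_bound_term mul0n big_ord0 muln0 add0n /=.
apply: (Rle_trans _ (2 * r * X)); last by nra.
apply: (INR_sum_geometric N (fun m => union_bound_term n N l delta m.+1))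
  => [|//|m mN]; first by lra.
exact: union_bound_term_le.
Qed.

Theorem lemma2p4 (n N l : nat) (delta : R) :
  (0 < n)%nat -> (0 < N)%nat -> (20 <= l)%nat ->
  0 < delta < 1 ->
  INR N <= 1000 * INR l * Rpower (INR n) ((1 - delta) * INR l) ->
  95 / 100 <= prob_RGP_Gn n N l (fun E s => expansion_event n N l delta s).
Proof.
move=> n_gt0 _ l_ge20 delta01 N_le.
rewrite (prob_RGP_Gn_sample_event _ _ _ (expansion_event n N l delta)) //.
have X_gt0 : 0 < INR ((n ^ l) ^ N)%N by apply: lt_0_INR; apply/ltP; rewrite !expn_gt0 n_gt0.
have bad_le := card_not_expansion_event_le n N l delta n_gt0 l_ge20 delta01 N_le.
suff : INR #|[set s | ~~ expansion_event n N l delta s]| / INR ((n ^ l) ^ N)%N <= 1/20 by lra.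
apply: (Rmult_le_reg_r _ _ _ X_gt0).
by rewrite /Rdiv Rmult_assoc Rinv_l ?Rmult_1_r; [lra | apply: Rgt_not_eq].
Qed.
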